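(* Let $\mathcal{F}$ be a family of finite subsets of $\mathbb{N}$ with $\bigcup\mathcal{F}=\mathbb{N}$, and assume $\mathcal{F}$ is convergence enforcing. Then there is a finite constant $C=C(\mathcal{F})$ such that for every sequence $(a_i)_{i\in\mathbb{N}}$ of nonnegative reals: if $\sum_{i\in A}a_i\le1$ for all $A\in\mathcal{F}$, then $\sum_{i\in\mathbb{N}}a_i\le C$.
   Context: A family $\mathcal{F}$ of finite subsets of $\mathbb{N}=\{1,2,\ldots\}$ is convergence enforcing if for every sequence $(a_i)_{i\in\mathbb{N}}$ of nonnegative reals: if $\sum_{i\in A}a_i\le1$ for all $A\in\mathcal{F}$, then $\sum_{i\in\mathbb{N}}a_i<\infty$. *)

From Stdlib Require Import Reals List.
From Coquelicot Require Import Coquelicot.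
Import ListNotations.
Open Scope R_scope.

(* Indices range over N = {1,2,...}; a sequence is a : nat -> R whose value
   at 0 is ignored. A finite subset of N is represented by a duplicate-free
   list of positive naturals; a family of finite subsets is a predicate on
   such lists (only well-formed lists count as members). *)
Definition finset_N (A : list nat) : Prop :=
  NoDup A /\ (forall i, In i A -> (1 <= i)%nat).

Definition set_family := list nat -> Prop.

Definition member (F : set_family) (A : list nat) : Prop := F A /\ finset_N A.

Definition sum_over (a : nat -> R) (A : list nat) : R :=
  fold_right (fun i s => a i + s) 0 A.

Definition psum (a : nat -> R) (n : nat) : R := sum_n (fun k => a (S k)) n.

(* The (extended-real) value of sum_{i in N} a_i; for nonnegative a the
   partial sums are nondecreasing, so this limit exists in Rbar. *)
Definition total_sum (a : nat -> R) : Rbar := Lim_seq (fun n => psum a n).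

Definition nonneg_seq (a : nat -> R) : Prop := forall i, (1 <= i)%nat -> 0 <= a i.

Definition admissible (F : set_family) (a : nat -> R) : Prop :=
  nonneg_seq a /\ forall A, member F A -> sum_over a A <= 1.

Definition convergence_enforcing (F : set_family) : Prop :=
  forall a, admissible F a -> Rbar_lt (total_sum a) p_infty.

Definition covers_N (F : set_family) : Prop :=
  forall i, (1 <= i)%nat -> exists A, member F A /\ In i A.

(** If no uniform bound existed, we could pick admissible sequences a_k whose
    partial sums exceed k 2^(k+1).  Since every index lies in some member of
    the family, admissible sequences have all terms in [0,1], so the mixture
    b = Σ_k 2^-(k+1) a_k converges termwise; being a convex combination of
    admissible sequences, b is admissible, yet its partial sums exceed every k,
    contradicting convergence enforcement. *)

From Stdlib Require Import Reals List Lra Lia Classical ClassicalEpsilon.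
From Coquelicot Require Import Coquelicot.
Open Scope R_scope.

Lemma is_series_0 : is_series (fun _ : nat => 0) 0.
Proof.
  apply (filterlim_ext (fun _ => 0)).
  - intros n. rewrite sum_n_const. ring.
  - apply filterlim_const.
Qed.

Lemma ex_series_0 : ex_series (fun _ : nat => 0).
Proof. exists 0. apply is_series_0. Qed.

Lemma Series_0 : Series (fun _ : nat => 0) = 0.
Proof. apply is_series_unique, is_series_0. Qed.

Lemma Series_ge0 (u : nat -> R) :
  (forall n, 0 <= u n) -> ex_series u -> 0 <= Series u.
Proof.
  intros Hu Hex. rewrite <- Series_0.
  apply Series_le; auto. intros n. split; [lra | auto].
Qed.

Lemma Series_ge_term (u : nat -> R) (k : nat) :
  (forall n, 0 <= u n) -> ex_series u -> u k <= Series u.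
Proof.
  intros Hu Hex.
  rewrite (Series_incr_n u (S k)); [simpl pred | lia | exact Hex].
  assert (Htail : 0 <= Series (fun n => u (S k + n)%nat)).
  { apply Series_ge0; auto. apply (ex_series_incr_n u (S k)), Hex. }
  assert (Hhead : u k <= sum_f_R0 u k).
  { destruct k as [|k]; simpl; [lra |].
    pose proof (cond_pos_sum u k Hu). lra. }
  lra.
Qed.

Lemma sum_over_app (a : nat -> R) (L1 L2 : list nat) :
  sum_over a (L1 ++ L2) = sum_over a L1 + sum_over a L2.
Proof. induction L1 as [|x L1 IH]; simpl; [ring | rewrite IH; ring]. Qed.

Lemma sum_over_scal (c : R) (a : nat -> R) (L : list nat) :
  sum_over (fun i => c * a i) L = c * sum_over a L.
Proof. induction L as [|x L IH]; simpl; [ring | rewrite IH; ring]. Qed.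

Lemma sum_over_ge0 (a : nat -> R) (L : list nat) :
  (forall i, In i L -> 0 <= a i) -> 0 <= sum_over a L.
Proof.
  induction L as [|x L IH]; simpl; intros H; [lra |].
  assert (0 <= a x) by auto. assert (0 <= sum_over a L) by auto. lra.
Qed.

Lemma sum_over_ge_term (a : nat -> R) (L : list nat) (i : nat) :
  (forall j, In j L -> 0 <= a j) -> In i L -> a i <= sum_over a L.
Proof.
  intros H Hi. apply in_split in Hi as [L1 [L2 ->]].
  rewrite sum_over_app. simpl.
  assert (0 <= sum_over a L1) by (apply sum_over_ge0; auto using in_or_app).
  assert (0 <= sum_over a L2) by (apply sum_over_ge0; auto using in_or_app, in_cons).
  lra.
Qed.

Lemma ex_series_sum_over (f : nat -> nat -> R) (L : list nat) :
  (forall i, In i L -> ex_series (fun n => f n i)) ->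
  ex_series (fun n => sum_over (f n) L).
Proof.
  induction L as [|x L IH]; simpl; intros H; [apply ex_series_0 |].
  apply (ex_series_plus (fun n => f n x) (fun n => sum_over (f n) L)); auto.
Qed.

Lemma Series_sum_over (f : nat -> nat -> R) (L : list nat) :
  (forall i, In i L -> ex_series (fun n => f n i)) ->
  Series (fun n => sum_over (f n) L) = sum_over (fun i => Series (fun n => f n i)) L.
Proof.
  induction L as [|x L IH]; simpl; intros H; [apply Series_0 |].
  rewrite Series_plus, IH; auto using ex_series_sum_over.
Qed.

Lemma psum_sum_over (a : nat -> R) (N : nat) :
  psum a N = sum_over a (seq 1 (S N)).
Proof.
  unfold psum. induction N as [|N IH].
  - rewrite sum_O. simpl. ring.
  - rewrite sum_Sn, IH, (seq_S (S N)), sum_over_app. simpl. change plus with Rplus. ring.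
Qed.

Lemma psum_le (a : nat -> R) (N M : nat) :
  nonneg_seq a -> (N <= M)%nat -> psum a N <= psum a M.
Proof.
  intros Ha HNM. rewrite !psum_sum_over.
  replace (S M) with (S N + (M - N))%nat by lia.
  rewrite seq_app, sum_over_app.
  assert (0 <= sum_over a (seq (1 + S N) (M - N))).
  { apply sum_over_ge0. intros i Hi. apply in_seq in Hi. apply Ha. lia. }
  lra.
Qed.

Lemma total_sum_le (a : nat -> R) (C : R) :
  (forall N, psum a N <= C) -> Rbar_le (total_sum a) C.
Proof.
  intros H. unfold total_sum. rewrite <- (Lim_seq_const C).
  apply Lim_seq_le_loc. exists 0%nat. auto.
Qed.

Lemma psum_le_total_sum (a : nat -> R) (N : nat) :
  nonneg_seq a -> Rbar_le (psum a N) (total_sum a).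
Proof.
  intros Ha. unfold total_sum. rewrite <- (Lim_seq_const (psum a N)) at 1.
  apply Lim_seq_le_loc. exists N. intros M HM. apply psum_le; auto.
Qed.

Lemma psum_bounded_of_finite (a : nat -> R) :
  nonneg_seq a -> Rbar_lt (total_sum a) p_infty -> exists C, forall N, psum a N <= C.
Proof.
  intros Ha Hfin. pose proof (fun N => psum_le_total_sum a N Ha) as Hle.
  destruct (total_sum a) as [C | |]; [exists C; exact Hle | contradiction | ].
  exfalso. exact (Hle 0%nat).
Qed.

Lemma admissible_le1 (F : set_family) (a : nat -> R) (i : nat) :
  covers_N F -> admissible F a -> (1 <= i)%nat -> a i <= 1.
Proof.
  intros Hcov [Ha HF] Hi.
  destruct (Hcov i Hi) as [A [HA HiA]].
  apply Rle_trans with (sum_over a A); [| apply HF, HA].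
  apply sum_over_ge_term; auto.
  intros j Hj. apply Ha. destruct HA as [_ [_ HA]]. auto.
Qed.

Lemma admissible_unbounded (F : set_family) :
  ~ (exists C : R, forall a, admissible F a -> Rbar_le (total_sum a) C) ->
  forall M : R, exists a N, admissible F a /\ M < psum a N.
Proof.
  intros Hunb M. apply NNPP. intros Hsmall. apply Hunb. exists M.
  intros a Ha. apply total_sum_le. intros N. apply Rnot_lt_le. intros HM.
  apply Hsmall. exists a, N. auto.
Qed.

Section Mixture.

Variable F : set_family.
Hypothesis F_covers : covers_N F.

Variable w : nat -> R.
Hypothesis w_ge0 : forall n, 0 <= w n.
Hypothesis w_summable : ex_series w.
Hypothesis w_sum_le1 : Series w <= 1.

Variable a : nat -> nat -> R.
Hypothesis a_admissible : forall n, admissible F (a n).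

Definition mixture (i : nat) : R := Series (fun n => w n * a n i).

Lemma mixture_term_ge0 (n i : nat) : (1 <= i)%nat -> 0 <= w n * a n i.
Proof.
  intros Hi. apply Rmult_le_pos; [apply w_ge0 |]. apply (a_admissible n), Hi.
Qed.

Lemma ex_series_mixture (i : nat) : (1 <= i)%nat -> ex_series (fun n => w n * a n i).
Proof.
  intros Hi. apply (@ex_series_le R_AbsRing R_CompleteNormedModule _ w); auto.
  intros n. change (norm (w n * a n i)) with (Rabs (w n * a n i)).
  rewrite Rabs_pos_eq by (apply mixture_term_ge0, Hi).
  rewrite <- (Rmult_1_r (w n)) at 2.
  apply Rmult_le_compat_l; [apply w_ge0 |]. apply (admissible_le1 F); auto.
Qed.

Lemma mixture_admissible : admissible F mixture.
Proof.
  split.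
  - intros i Hi. apply Series_ge0; auto using mixture_term_ge0, ex_series_mixture.
  - intros A [HA [HnodupA HposA]]. unfold mixture.
    rewrite <- Series_sum_over by auto using ex_series_mixture.
    apply Rle_trans with (Series w); [| exact w_sum_le1].
    apply Series_le; auto. intros n. split.
    + apply sum_over_ge0. auto using mixture_term_ge0.
    + rewrite sum_over_scal. rewrite <- (Rmult_1_r (w n)) at 2.
      apply Rmult_le_compat_l; [apply w_ge0 |].
      apply (a_admissible n). repeat split; auto.
Qed.

Lemma psum_mixture_ge (k N : nat) : w k * psum (a k) N <= psum mixture N.
Proof.
  assert (Hseq : forall i, In i (seq 1 (S N)) -> (1 <= i)%nat)
    by (intros i Hi; apply in_seq in Hi; lia).
  rewrite !psum_sum_over, <- sum_over_scal. unfold mixture.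
  rewrite <- Series_sum_over by auto using ex_series_mixture.
  apply (Series_ge_term (fun n => sum_over (fun i => w n * a n i) (seq 1 (S N)))).
  - intros n. apply sum_over_ge0. auto using mixture_term_ge0.
  - apply ex_series_sum_over. auto using ex_series_mixture.
Qed.

End Mixture.

Definition halves (n : nat) : R := (/ 2) ^ S n.

Lemma halves_pos (n : nat) : 0 < halves n.
Proof. apply pow_lt. lra. Qed.

Lemma halves_ge0 (n : nat) : 0 <= halves n.
Proof. left. apply halves_pos. Qed.

Lemma is_series_halves : is_series halves 1.
Proof.
  replace 1 with (/ 2 * / (1 - / 2)) by field.
  apply (is_series_scal_l (/ 2) (fun n => (/ 2) ^ n)).
  apply is_series_geom. rewrite Rabs_pos_eq; lra.
Qed.

Lemma ex_series_halves : ex_series halves.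
Proof. exists 1. apply is_series_halves. Qed.

Lemma Series_halves_le1 : Series halves <= 1.
Proof. right. apply is_series_unique, is_series_halves. Qed.

Theorem proposition4p2 (F : set_family) :
  covers_N F -> convergence_enforcing F ->
  exists C : R, forall a : nat -> R,
    admissible F a -> Rbar_le (total_sum a) (Finite C).
Proof.
  intros Hcov Hce. apply NNPP. intros Hunb.
  assert (Hlarge : forall k : nat, exists p : (nat -> R) * nat,
             admissible F (fst p) /\ INR k < halves k * psum (fst p) (snd p)).
  { intros k. destruct (admissible_unbounded F Hunb (INR k / halves k)) as [a [N [Ha HN]]].
    exists (a, N). split; [exact Ha |]. simpl.
    pose proof (halves_pos k).
    replace (INR k) with (halves k * (INR k / halves k)) by (field; lra).
    apply Rmult_lt_compat_l; lra. }
  destruct (choice _ Hlarge) as [p Hp].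
  set (a k := fst (p k)). set (N k := snd (p k)).
  assert (Ha : forall k, admissible F (a k)) by (intros k; apply Hp).
  pose proof (mixture_admissible F Hcov halves halves_ge0 ex_series_halves
                Series_halves_le1 a Ha) as Hb.
  destruct (psum_bounded_of_finite _ (proj1 Hb) (Hce _ Hb)) as [C HC].
  destruct (INR_unbounded C) as [k Hk].
  pose proof (psum_mixture_ge F Hcov halves halves_ge0 ex_series_halves a Ha k (N k)).
  pose proof (HC (N k)). pose proof (proj2 (Hp k)).
  unfold a, N in *. lra.
Qed.
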